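(* Let $V$ be a $\mathfrak g[t]$-module and $v\in V$ such that $(x_2\otimes t^r)v=0$ for all $r\ge0$, $(h\otimes t^p)v=0$ for all $h\in\mathfrak h$ and all $p\in\mathbb N$ ($p\ge1$), and $Y_2(r,s)v=0$ for all $r,s\in\mathbb Z_+$ with $r+s\ge N$, for some $N\in\mathbb N$. Suppose $(y_2\otimes t^{j+1})v=0$ for some $j\in\mathbb N$. Then for $k\in\mathbb Z_+$: (i) $Y_2(r,s)(y_2\otimes t^j)^kv=0$ for all $r+s\ge N-2k$; (ii) if moreover $(y_3\otimes t^{b+j})v=0$ for some $b\in\mathbb N$ and $(y_1\otimes t^r)v=0$ for all $r\ge0$, then $Y_2(r,s)(y_2\otimes t^j)^k(y_3\otimes t^b)v=0$ for all $r+s\ge N-2k-1$; (iii) if moreover $(x_1\otimes t^{a+j})v=0$ for some $a\in\mathbb N$ and $(x_3\otimes t^r)v=0$ for all $r\ge0$, then $Y_2(r,s)(y_2\otimes t^j)^k(x_1\otimes t^a)v=0$ for all $r+s\ge N-2k-1$; (iv) if moreover $(x_1\otimes t^{a+j})v=0$ and $(y_3\otimes t^{b+j})v=0$ for some $a,b\in\mathbb N$, and $(y_1\otimes t^r)v=0=(x_3\otimes t^r)v$ for all $r\ge0$, then $Y_2(r,s)(y_2\otimes t^j)^k(x_1\otimes t^a)(y_3\otimes t^b)v=0$ for all $r+s\ge N-2k-2$.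
   Context: $\mathfrak g=\mathfrak{sl}(1|2)$ is the Lie superalgebra of $3\times3$ complex supertrace-zero matrices with superbracket $[A,B]=AB-(-1)^{|A||B|}BA$; $x_1=E_{12},x_2=E_{23},x_3=E_{13},y_1=E_{21},y_2=E_{32},y_3=E_{31}$ ($x_2,y_2$ even, the others odd); $\mathfrak h=\operatorname{span}\{E_{11}+E_{22},E_{22}-E_{33}\}$; $\mathfrak g[t]=\mathfrak g\otimes\mathbb C[t]$ with $[a\otimes t^r,b\otimes t^s]=[a,b]\otimes t^{r+s}$. For $u\in U(\mathfrak g[t])$, $u^{(k)}=u^k/k!$, and $Y_2(r,s)=(x_2\otimes t)^{(s)}(y_2\otimes1)^{(r+s)}$ for $r,s\in\mathbb Z_+$. *)

From HB Require Import structures.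
From mathcomp Require Import all_boot all_order all_algebra.
Set Implicit Arguments. Unset Strict Implicit. Unset Printing Implicit Defensive.
Import Order.TTheory GRing.Theory Num.Theory.
Local Open Scope ring_scope.

Section SL12.
Variable F : fieldType.

(* index 0 is the even basis vector of C^{1|2}, indices 1,2 are odd *)
Definition ix (n : nat) : 'I_3 := inord n.
Definition E (a b : nat) : 'M[F]_3 := delta_mx (ix a) (ix b).

(* standard basis of sl(1|2) (indices shifted down by one) *)
Definition x1 := E 0 1.  Definition x2 := E 1 2.  Definition x3 := E 0 2.
Definition y1 := E 1 0.  Definition y2 := E 2 1.  Definition y3 := E 2 0.
Definition h1 := E 0 0 + E 1 1.
Definition h2 := E 1 1 - E 2 2.

Definition str (A : 'M[F]_3) : F := A (ix 0) (ix 0) - A (ix 1) (ix 1) - A (ix 2) (ix 2).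
Definition in_sl12 (A : 'M[F]_3) : Prop := str A = 0.

(* A is homogeneous of parity b (false = even, true = odd) *)
Definition homog (b : bool) (A : 'M[F]_3) : Prop :=
  forall i j : 'I_3, (((val i == 0%N) (+) (val j == 0%N)) != b) -> A i j = 0.

Definition sbr (pA pB : bool) (A B : 'M[F]_3) : 'M[F]_3 :=
  A * B - (-1) ^+ (pA && pB) *: (B * A).

(* A g[t]-module structure on V: rho A r is the action of A (x) t^r. *)
Definition is_gt_module (V : lmodType F) (rho : 'M[F]_3 -> nat -> V -> V) : Prop :=
  [/\ (forall A r (c : F) (u w : V), rho A r (c *: u + w) = c *: rho A r u + rho A r w),
      (forall A B r (c : F) (u : V), in_sl12 A -> in_sl12 B ->
          rho (c *: A + B) r u = c *: rho A r u + rho B r u) &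
      (forall A B pA pB r s (u : V), in_sl12 A -> in_sl12 B -> homog pA A -> homog pB B ->
          rho (sbr pA pB A B) (r + s)%N u
          = rho A r (rho B s u) - (-1) ^+ (pA && pB) *: rho B s (rho A r u))].

Definition divpow (V : lmodType F) (f : V -> V) (k : nat) (u : V) : V :=
  (k`!%:R)^-1 *: iter k f u.

Definition Y2 (V : lmodType F) (rho : 'M[F]_3 -> nat -> V -> V) (r s : nat) (u : V) : V :=
  divpow (rho x2 1%N) s (divpow (rho y2 0%N) (r + s) u).

End SL12.

(* For w killed by x2 (x) t^j and h2 (x) t^j, the sl2-type relations among y2 (x) 1,
   x2 (x) t^j, h2 (x) t^j and y2 (x) t^j give
     (x2 (x) t^j) (y2 (x) 1)^(n+2) w = -(n+2)(n+1) (y2 (x) 1)^n (y2 (x) t^j) w,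
   so in characteristic 0 each factor y2 (x) t^j lowers the nilpotency order of y2 (x) 1
   by at most two, and Y2(r,s) vanishes as soon as (y2 (x) 1)^(r+s) does.  The vectors
   (y3 (x) t^b) v, (x1 (x) t^a) v and (x1 (x) t^a)(y3 (x) t^b) v satisfy the same
   annihilation conditions, and commuting y1 (x) t^b, resp. x3 (x) t^a, past powers of
   y2 (x) 1 shows that each factor y3 (x) t^b or x1 (x) t^a lowers that order by one. *)
From HB Require Import structures.
From mathcomp Require Import all_boot all_order all_algebra.
From mathcomp Require Import ring zify.
Import GRing.Theory.
Local Open Scope ring_scope.

Ltac case_ord3 := let m := fresh "m" in let Hm := fresh "Hm" in
  case=> m Hm; case: m Hm => [|[|[|?]]] ? //.

Ltac unfold_basis := rewrite /x1 /x2 /x3 /y1 /y2 /y3 /h1 /h2 /E.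

Ltac sbr_compute := apply/matrixP; case_ord3; case_ord3; rewrite /sbr; unfold_basis;
  rewrite /= ?expr0 ?expr1 !mxE /= ?big_ord_recr ?big_ord0 /= ?mxE;
  rewrite -!val_eqE /= /ix ?inordK //=; ring.

Ltac homog_compute := case_ord3; case_ord3; unfold_basis; rewrite ?mxE;
  rewrite -!val_eqE /= /ix ?inordK //= => _; exact: subrr.

Ltac sl12_compute := rewrite /in_sl12 /str; unfold_basis;
  rewrite !mxE -!val_eqE /ix /= !inordK //=; ring.

Section StructureConstants.
Variable F : fieldType.

Lemma sbr_x2_y2 : sbr false false (x2 F) (y2 F) = h2 F. Proof. sbr_compute. Qed.
Lemma sbr_h2_y2 : sbr false false (h2 F) (y2 F) = (-2) *: y2 F. Proof. sbr_compute. Qed.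
Lemma sbr_y2_y2 : sbr false false (y2 F) (y2 F) = 0. Proof. sbr_compute. Qed.
Lemma sbr_x2_y3 : sbr false true (x2 F) (y3 F) = y1 F. Proof. sbr_compute. Qed.
Lemma sbr_h2_y3 : sbr false true (h2 F) (y3 F) = (-1) *: y3 F. Proof. sbr_compute. Qed.
Lemma sbr_y2_y3 : sbr false true (y2 F) (y3 F) = 0. Proof. sbr_compute. Qed.
Lemma sbr_x2_x1 : sbr false true (x2 F) (x1 F) = (-1) *: x3 F. Proof. sbr_compute. Qed.
Lemma sbr_h2_x1 : sbr false true (h2 F) (x1 F) = (-1) *: x1 F. Proof. sbr_compute. Qed.
Lemma sbr_y2_x1 : sbr false true (y2 F) (x1 F) = 0. Proof. sbr_compute. Qed.
Lemma sbr_y1_y2 : sbr true false (y1 F) (y2 F) = (-1) *: y3 F. Proof. sbr_compute. Qed.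
Lemma sbr_x3_y2 : sbr true false (x3 F) (y2 F) = x1 F. Proof. sbr_compute. Qed.
Lemma sbr_x3_y3 : sbr true true (x3 F) (y3 F) = h1 F - h2 F. Proof. sbr_compute. Qed.
Lemma sbr_x1_y3 : sbr true true (x1 F) (y3 F) = y2 F. Proof. sbr_compute. Qed.

Lemma homog_x1 : homog true (x1 F). Proof. homog_compute. Qed.
Lemma homog_x3 : homog true (x3 F). Proof. homog_compute. Qed.
Lemma homog_y1 : homog true (y1 F). Proof. homog_compute. Qed.
Lemma homog_y3 : homog true (y3 F). Proof. homog_compute. Qed.
Lemma homog_x2 : homog false (x2 F). Proof. homog_compute. Qed.
Lemma homog_y2 : homog false (y2 F). Proof. homog_compute. Qed.
Lemma homog_h2 : homog false (h2 F). Proof. homog_compute. Qed.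

Lemma sl12_x1 : in_sl12 (x1 F). Proof. sl12_compute. Qed.
Lemma sl12_x2 : in_sl12 (x2 F). Proof. sl12_compute. Qed.
Lemma sl12_x3 : in_sl12 (x3 F). Proof. sl12_compute. Qed.
Lemma sl12_y1 : in_sl12 (y1 F). Proof. sl12_compute. Qed.
Lemma sl12_y2 : in_sl12 (y2 F). Proof. sl12_compute. Qed.
Lemma sl12_y3 : in_sl12 (y3 F). Proof. sl12_compute. Qed.
Lemma sl12_h2 : in_sl12 (h2 F). Proof. sl12_compute. Qed.

Lemma sl12_0 : in_sl12 (0 : 'M[F]_3).
Proof. by rewrite /in_sl12 /str !mxE !subr0. Qed.

End StructureConstants.

Section IteratedCommutators.
Context {F : fieldType} {V : lmodType F}.
Implicit Types (f A B H X Y Yj : V -> V) (c : F) (w : V).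

Lemma linear_fun0 {f} : linear f -> f 0 = 0.
Proof. by move=> f_lin; have := zmod_morphism_linear f_lin 0 0; rewrite !subrr. Qed.

Lemma scaler_eq0_cancel {c w} : c != 0 -> c *: w = 0 -> w = 0.
Proof. by move=> c0 /eqP; rewrite scaler_eq0 (negbTE c0) => /eqP. Qed.

Lemma iter_linear0 {f} n : linear f -> iter n f 0 = 0.
Proof. by move=> f_lin; elim: n => //= n ->; exact: linear_fun0. Qed.

Lemma iter_commute {A Y} n w :
  (forall w, A (Y w) = Y (A w)) -> A (iter n Y w) = iter n Y (A w).
Proof. by move=> AY; elim: n => //= n <-; exact: AY. Qed.

Lemma iter_commutator {A B Y c} n w : linear Y ->
    (forall w, A (Y w) = Y (A w) + c *: B w) -> (forall w, B (Y w) = Y (B w)) ->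
  A (iter n.+1 Y w) = iter n.+1 Y (A w) + (n.+1%:R * c) *: iter n Y (B w).
Proof.
move=> Y_lin AY BY; elim: n => [|n IH]; first by rewrite /= AY mul1r.
rewrite [iter n.+2 Y w]iterS AY IH (GRing.semilinear_linear Y_lin).2.
rewrite (scalable_linear Y_lin) (iter_commute _ _ BY) -addrA -scalerDl.
by congr (_ + _ *: _); rewrite -[n.+2]addn1 natrD; ring.
Qed.

Lemma sl2_raise_iter {X H Yj Y} n {w} : linear Y ->
    (forall w, X (Y w) = Y (X w) + H w) ->
    (forall w, H (Y w) = Y (H w) + (-2) *: Yj w) ->
    (forall w, Yj (Y w) = Y (Yj w)) -> X w = 0 -> H w = 0 ->
  X (iter n.+2 Y w) = (- (n.+2 * n.+1)%:R) *: iter n Y (Yj w).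
Proof.
move=> Y_lin XY HY YjY Xw Hw.
have HYw m : H (iter m.+1 Y w) = (m.+1%:R * (-2)) *: iter m Y (Yj w).
  by rewrite (iter_commutator _ _ Y_lin HY YjY) Hw iter_linear0 // add0r.
elim: n => [|n IH].
  rewrite [iter 2 Y w]/= XY -[Y w]/(iter 1 Y w) HYw /= XY Xw Hw addr0.
  by rewrite !(linear_fun0 Y_lin) add0r; congr (_ *: _); ring.
rewrite [iter n.+3 Y w]iterS XY IH HYw (scalable_linear Y_lin) -iterS -scalerDl.
by congr (_ *: _); rewrite !natrM -[n.+3]addn1 -[n.+2]addn1 -[n.+1]addn1 !natrD; ring.
Qed.

End IteratedCommutators.

Section Module.
Context {F : fieldType} {V : lmodType F} {rho : 'M[F]_3 -> nat -> V -> V}.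
Hypothesis rho_mod : is_gt_module rho.
Hypothesis char0 : [pchar F] =i pred0.

Lemma natr_neq0 n : (0 < n)%N -> n%:R != 0 :> F.
Proof. by rewrite ((pcharf0P F).1 char0 n) -lt0n. Qed.

Lemma rho_linear A r : linear (rho A r).
Proof. by case: rho_mod => lin _ _ c u w; exact: lin. Qed.

Lemma rho_vec0 A r : rho A r 0 = 0.
Proof. exact: linear_fun0 (rho_linear A r). Qed.

Lemma rho_mx0 r u : rho 0 r u = 0.
Proof.
case: rho_mod => _ lin _; have := lin 0 0 r 1 u (sl12_0 F) (sl12_0 F).
rewrite scale1r addr0 scale1r => double.
by apply: (addrI (rho 0 r u)); rewrite addr0 -double.
Qed.

Lemma rho_scale A r c u : in_sl12 A -> rho (c *: A) r u = c *: rho A r u.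
Proof.
case: rho_mod => _ lin _ sA.
by have := lin A 0 r c u sA (sl12_0 F); rewrite !addr0 rho_mx0 addr0.
Qed.

Lemma rho_sbr {A B pA pB} r s u : in_sl12 A -> in_sl12 B -> homog pA A -> homog pB B ->
  rho A r (rho B s u) = (-1) ^+ (pA && pB) *: rho B s (rho A r u) + rho (sbr pA pB A B) (r + s) u.
Proof. by case: rho_mod => _ _ br sA sB hA hB; rewrite br // addrC subrK. Qed.

Ltac rho_bracket sA sB hA hB E :=
  rewrite (rho_sbr _ _ _ sA sB hA hB) E /= ?expr0 ?expr1 ?scale1r
    ?rho_mx0 ?addr0 ?rho_scale ?scaleN1r //.

Lemma comm_x2_y2 r s u :
  rho (x2 F) r (rho (y2 F) s u) = rho (y2 F) s (rho (x2 F) r u) + rho (h2 F) (r + s) u.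
Proof. by rho_bracket (sl12_x2 F) (sl12_y2 F) (homog_x2 F) (homog_y2 F) (sbr_x2_y2 F). Qed.

Lemma comm_h2_y2 r s u : rho (h2 F) r (rho (y2 F) s u)
  = rho (y2 F) s (rho (h2 F) r u) + (-2) *: rho (y2 F) (r + s) u.
Proof.
by rho_bracket (sl12_h2 F) (sl12_y2 F) (homog_h2 F) (homog_y2 F) (sbr_h2_y2 F);
  exact: sl12_y2.
Qed.

Lemma comm_y2_y2 r s u : rho (y2 F) r (rho (y2 F) s u) = rho (y2 F) s (rho (y2 F) r u).
Proof. by rho_bracket (sl12_y2 F) (sl12_y2 F) (homog_y2 F) (homog_y2 F) (sbr_y2_y2 F). Qed.

Lemma comm_x2_y3 r s u :
  rho (x2 F) r (rho (y3 F) s u) = rho (y3 F) s (rho (x2 F) r u) + rho (y1 F) (r + s) u.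
Proof. by rho_bracket (sl12_x2 F) (sl12_y3 F) (homog_x2 F) (homog_y3 F) (sbr_x2_y3 F). Qed.

Lemma comm_h2_y3 r s u : rho (h2 F) r (rho (y3 F) s u)
  = rho (y3 F) s (rho (h2 F) r u) + (-1) *: rho (y3 F) (r + s) u.
Proof.
by rho_bracket (sl12_h2 F) (sl12_y3 F) (homog_h2 F) (homog_y3 F) (sbr_h2_y3 F);
  exact: sl12_y3.
Qed.

Lemma comm_y2_y3 r s u : rho (y2 F) r (rho (y3 F) s u) = rho (y3 F) s (rho (y2 F) r u).
Proof. by rho_bracket (sl12_y2 F) (sl12_y3 F) (homog_y2 F) (homog_y3 F) (sbr_y2_y3 F). Qed.

Lemma comm_x2_x1 r s u : rho (x2 F) r (rho (x1 F) s u)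
  = rho (x1 F) s (rho (x2 F) r u) + (-1) *: rho (x3 F) (r + s) u.
Proof.
by rho_bracket (sl12_x2 F) (sl12_x1 F) (homog_x2 F) (homog_x1 F) (sbr_x2_x1 F);
  exact: sl12_x3.
Qed.

Lemma comm_h2_x1 r s u : rho (h2 F) r (rho (x1 F) s u)
  = rho (x1 F) s (rho (h2 F) r u) + (-1) *: rho (x1 F) (r + s) u.
Proof.
by rho_bracket (sl12_h2 F) (sl12_x1 F) (homog_h2 F) (homog_x1 F) (sbr_h2_x1 F);
  exact: sl12_x1.
Qed.

Lemma comm_y2_x1 r s u : rho (y2 F) r (rho (x1 F) s u) = rho (x1 F) s (rho (y2 F) r u).
Proof. by rho_bracket (sl12_y2 F) (sl12_x1 F) (homog_y2 F) (homog_x1 F) (sbr_y2_x1 F). Qed.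

Lemma comm_y1_y2 r s u : rho (y1 F) r (rho (y2 F) s u)
  = rho (y2 F) s (rho (y1 F) r u) + (-1) *: rho (y3 F) (r + s) u.
Proof.
by rho_bracket (sl12_y1 F) (sl12_y2 F) (homog_y1 F) (homog_y2 F) (sbr_y1_y2 F);
  exact: sl12_y3.
Qed.

Lemma comm_x3_y2 r s u :
  rho (x3 F) r (rho (y2 F) s u) = rho (y2 F) s (rho (x3 F) r u) + 1 *: rho (x1 F) (r + s) u.
Proof. by rho_bracket (sl12_x3 F) (sl12_y2 F) (homog_x3 F) (homog_y2 F) (sbr_x3_y2 F). Qed.

Lemma comm_x3_y3 r s u : rho (x3 F) r (rho (y3 F) s u)
  = - rho (y3 F) s (rho (x3 F) r u) + rho (h1 F - h2 F) (r + s) u.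
Proof. by rho_bracket (sl12_x3 F) (sl12_y3 F) (homog_x3 F) (homog_y3 F) (sbr_x3_y3 F). Qed.

Lemma comm_x1_y3 r s u : rho (x1 F) r (rho (y3 F) s u)
  = - rho (y3 F) s (rho (x1 F) r u) + rho (y2 F) (r + s) u.
Proof. by rho_bracket (sl12_x1 F) (sl12_y3 F) (homog_x1 F) (homog_y3 F) (sbr_x1_y3 F). Qed.

Lemma rho_vanish_ge {A c m u} : c != 0 ->
    (forall r s w, rho (h2 F) r (rho A s w) = rho A s (rho (h2 F) r w) + c *: rho A (r + s) w) ->
    (forall p, (0 < p)%N -> rho (h2 F) p u = 0) -> rho A m u = 0 ->
  forall q, (m <= q)%N -> rho A q u = 0.
Proof.
move=> c0 h2A h2u Au q /subnK <-; elim: (q - m)%N => [|d IH]; first by rewrite add0n.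
apply: (scaler_eq0_cancel c0); have := h2A 1%N (d + m)%N u.
by rewrite IH h2u // !rho_vec0 add0r => <-.
Qed.

(* The annihilation conditions that [y2 (x) t^j] preserves for [j > 0] and under which
   [sl2_raise_iter] applies at level [j]. *)
Definition primitive_at (j : nat) (u : V) : Prop :=
  [/\ rho (x2 F) j u = 0, forall p, (j <= p)%N -> rho (h2 F) p u = 0
    & forall q, (j < q)%N -> rho (y2 F) q u = 0].

Lemma primitive_at_y2 {j u} : (0 < j)%N -> primitive_at j u -> primitive_at j (rho (y2 F) j u).
Proof.
move=> j_gt0 [x2u h2u y2u]; split.
- by rewrite comm_x2_y2 x2u rho_vec0 add0r h2u //; lia.
- by move=> p jp; rewrite comm_h2_y2 h2u // rho_vec0 add0r y2u ?scaler0 //; lia.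
- by move=> q jq; rewrite comm_y2_y2 y2u // rho_vec0.
Qed.

Lemma primitive_at_y3 {j b w} : primitive_at j w -> rho (y1 F) (j + b) w = 0 ->
    (forall p, (j <= p)%N -> rho (y3 F) (p + b) w = 0) ->
  primitive_at j (rho (y3 F) b w).
Proof.
move=> [x2w h2w y2w] y1w y3w; split.
- by rewrite comm_x2_y3 x2w rho_vec0 add0r.
- by move=> p jp; rewrite comm_h2_y3 h2w // rho_vec0 add0r y3w ?scaler0.
- by move=> q jq; rewrite comm_y2_y3 y2w // rho_vec0.
Qed.

Lemma primitive_at_x1 {j a w} : primitive_at j w -> rho (x3 F) (j + a) w = 0 ->
    (forall p, (j <= p)%N -> rho (x1 F) (p + a) w = 0) ->
  primitive_at j (rho (x1 F) a w).
Proof.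
move=> [x2w h2w y2w] x3w x1w; split.
- by rewrite comm_x2_x1 x2w rho_vec0 add0r x3w scaler0.
- by move=> p jp; rewrite comm_h2_x1 h2w // rho_vec0 add0r x1w ?scaler0.
- by move=> q jq; rewrite comm_y2_x1 y2w // rho_vec0.
Qed.

Lemma iter_y2_y3_eq0 {M b w} : rho (y1 F) b w = 0 ->
    (forall n, (M <= n)%N -> iter n (rho (y2 F) 0%N) w = 0) ->
  forall n, (M - 1 <= n)%N -> iter n (rho (y2 F) 0%N) (rho (y3 F) b w) = 0.
Proof.
move=> y1w nil_w n Mn.
have y1Y0 z : rho (y1 F) b (rho (y2 F) 0%N z)
    = rho (y2 F) 0%N (rho (y1 F) b z) + (-1) *: rho (y3 F) b z.
  by rewrite comm_y1_y2 addn0.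
have y3Y0 z : rho (y3 F) b (rho (y2 F) 0%N z) = rho (y2 F) 0%N (rho (y3 F) b z).
  by rewrite -comm_y2_y3.
apply: (scaler_eq0_cancel (c := - n.+1%:R)); first by rewrite oppr_eq0 natr_neq0.
have := iter_commutator n w (rho_linear _ _) y1Y0 y3Y0.
rewrite nil_w; last lia.
by rewrite rho_vec0 y1w (iter_linear0 _ (rho_linear _ _)) add0r mulrN1 => <-.
Qed.

Lemma iter_y2_x1_eq0 {M a w} : rho (x3 F) a w = 0 ->
    (forall n, (M <= n)%N -> iter n (rho (y2 F) 0%N) w = 0) ->
  forall n, (M - 1 <= n)%N -> iter n (rho (y2 F) 0%N) (rho (x1 F) a w) = 0.
Proof.
move=> x3w nil_w n Mn.
have x3Y0 z : rho (x3 F) a (rho (y2 F) 0%N z)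
    = rho (y2 F) 0%N (rho (x3 F) a z) + 1 *: rho (x1 F) a z.
  by rewrite comm_x3_y2 addn0.
have x1Y0 z : rho (x1 F) a (rho (y2 F) 0%N z) = rho (y2 F) 0%N (rho (x1 F) a z).
  by rewrite -comm_y2_x1.
apply: (scaler_eq0_cancel (c := n.+1%:R)); first exact: natr_neq0.
have := iter_commutator n w (rho_linear _ _) x3Y0 x1Y0.
rewrite nil_w; last lia.
by rewrite rho_vec0 x3w (iter_linear0 _ (rho_linear _ _)) add0r mulr1 => <-.
Qed.

Lemma iter_y2_iter_y2t_eq0 {j M u} : (0 < j)%N -> primitive_at j u ->
    (forall n, (M <= n)%N -> iter n (rho (y2 F) 0%N) u = 0) ->
  forall k n, (M <= n + 2 * k)%N -> iter n (rho (y2 F) 0%N) (iter k (rho (y2 F) j) u) = 0.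
Proof.
move=> j_gt0 prim_u nil_u; elim=> [|k IH] n Mnk; first by apply: nil_u; lia.
have [x2w h2w _] : primitive_at j (iter k (rho (y2 F) j) u).
  by elim: (k) => //= i; exact: primitive_at_y2.
have x2Y0 z : rho (x2 F) j (rho (y2 F) 0%N z)
    = rho (y2 F) 0%N (rho (x2 F) j z) + rho (h2 F) j z.
  by rewrite comm_x2_y2 addn0.
have h2Y0 z : rho (h2 F) j (rho (y2 F) 0%N z)
    = rho (y2 F) 0%N (rho (h2 F) j z) + (-2) *: rho (y2 F) j z.
  by rewrite comm_h2_y2 addn0.
have y2tY0 z : rho (y2 F) j (rho (y2 F) 0%N z) = rho (y2 F) 0%N (rho (y2 F) j z).
  exact: comm_y2_y2.
apply: (scaler_eq0_cancel (c := - (n.+2 * n.+1)%:R)); first by rewrite oppr_eq0 natr_neq0.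
rewrite -(sl2_raise_iter n (rho_linear _ _) x2Y0 h2Y0 y2tY0 x2w (h2w j (leqnn j))).
by rewrite IH ?rho_vec0 //; lia.
Qed.

Lemma Y2_eq0_of_iter r s u : iter (r + s) (rho (y2 F) 0%N) u = 0 -> Y2 rho r s u = 0.
Proof. by rewrite /Y2 /divpow => ->; rewrite scaler0 (iter_linear0 _ (rho_linear _ _)) scaler0. Qed.

Lemma iter_y2_eq0_of_Y2 {M u} : (forall r s, (M <= r + s)%N -> Y2 rho r s u = 0) ->
  forall n, (M <= n)%N -> iter n (rho (y2 F) 0%N) u = 0.
Proof.
move=> Y2u n Mn; have := Y2u n 0%N; rewrite addn0 /Y2 /divpow /= addn0 invr1 scale1r.
by move/(_ Mn); apply: scaler_eq0_cancel; rewrite invr_eq0 natr_neq0 // fact_gt0.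
Qed.

Lemma Y2_iter_y2t_eq0 {j M u} : (0 < j)%N -> primitive_at j u ->
    (forall n, (M <= n)%N -> iter n (rho (y2 F) 0%N) u = 0) ->
  forall k r s, (M - 2 * k <= r + s)%N -> Y2 rho r s (iter k (rho (y2 F) j) u) = 0.
Proof.
move=> j_gt0 prim_u nil_u k r s Mkrs; apply: Y2_eq0_of_iter.
by apply: (iter_y2_iter_y2t_eq0 j_gt0 prim_u nil_u); lia.
Qed.

Section HighestWeightVector.
Context {v : V} {j : nat}.
Hypothesis x2_v : forall r, rho (x2 F) r v = 0.
Hypothesis h_v : forall c1 c2 p, (0 < p)%N -> rho (c1 *: h1 F + c2 *: h2 F) p v = 0.
Hypothesis j_gt0 : (0 < j)%N.
Hypothesis y2_v : rho (y2 F) j.+1 v = 0.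

Lemma h2_v p : (0 < p)%N -> rho (h2 F) p v = 0.
Proof. by move=> p_gt0; have := @h_v 0 1 p p_gt0; rewrite scale0r add0r scale1r. Qed.

Lemma y2_v_gt q : (j < q)%N -> rho (y2 F) q v = 0.
Proof.
apply: (rho_vanish_ge _ comm_h2_y2 h2_v y2_v).
by rewrite oppr_eq0 (natr_neq0 2).
Qed.

Lemma primitive_v : primitive_at j v.
Proof. by split=> // [p jp|]; [apply: h2_v; lia | exact: y2_v_gt]. Qed.

Lemma primitive_y3_v b : rho (y3 F) (b + j) v = 0 -> (forall r, rho (y1 F) r v = 0) ->
  primitive_at j (rho (y3 F) b v).
Proof.
move=> y3_v y1_v; apply: primitive_at_y3 primitive_v (y1_v _) _ => p jp.
apply: (rho_vanish_ge _ comm_h2_y3 h2_v y3_v); last lia.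
by rewrite oppr_eq0 oner_eq0.
Qed.

Lemma x1_v_ge {a} : rho (x1 F) (a + j) v = 0 -> forall q, (a + j <= q)%N -> rho (x1 F) q v = 0.
Proof.
apply: (rho_vanish_ge _ comm_h2_x1 h2_v).
by rewrite oppr_eq0 oner_eq0.
Qed.

Lemma primitive_x1_v a : rho (x1 F) (a + j) v = 0 -> (forall r, rho (x3 F) r v = 0) ->
  primitive_at j (rho (x1 F) a v).
Proof.
move=> x1_v x3_v; apply: primitive_at_x1 primitive_v (x3_v _) _ => p jp.
by apply: (x1_v_ge x1_v); lia.
Qed.

Lemma x3_y3_v b q : (forall r, rho (x3 F) r v = 0) -> (0 < q + b)%N ->
  rho (x3 F) q (rho (y3 F) b v) = 0.
Proof.
move=> x3_v qb_gt0; rewrite comm_x3_y3 x3_v rho_vec0 oppr0 add0r.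
by have := @h_v 1 (-1) _ qb_gt0; rewrite scale1r scaleN1r.
Qed.

Lemma primitive_x1_y3_v a b : (0 < a)%N ->
    rho (x1 F) (a + j) v = 0 -> rho (y3 F) (b + j) v = 0 ->
    (forall r, rho (y1 F) r v = 0) -> (forall r, rho (x3 F) r v = 0) ->
  primitive_at j (rho (x1 F) a (rho (y3 F) b v)).
Proof.
move=> a_gt0 x1_v y3_v y1_v x3_v.
apply: primitive_at_x1 (primitive_y3_v b y3_v y1_v) (x3_y3_v b (j + a) x3_v _) _ => [|p jp];
  first lia.
by rewrite comm_x1_y3 (x1_v_ge x1_v) ?rho_vec0 ?oppr0 ?add0r ?y2_v_gt //; lia.
Qed.

End HighestWeightVector.

End Module.

Arguments primitive_at {F V} rho j u.

Theorem mainTheorem4 (F : fieldType) (V : lmodType F)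
    (rho : 'M[F]_3 -> nat -> V -> V) (v : V) (N j : nat) :
  [pchar F] =i pred0 ->
  is_gt_module rho ->
  (forall r : nat, rho (x2 F) r v = 0) ->
  (forall (c1 c2 : F) (p : nat), (0 < p)%N -> rho (c1 *: h1 F + c2 *: h2 F) p v = 0) ->
  (0 < N)%N ->
  (forall r s : nat, (N <= r + s)%N -> Y2 rho r s v = 0) ->
  (0 < j)%N ->
  rho (y2 F) j.+1 v = 0 ->
  forall k : nat,
    (* (i) *)
    (forall r s : nat, (N - 2 * k <= r + s)%N ->
        Y2 rho r s (iter k (rho (y2 F) j) v) = 0)
    (* (ii) *)
 /\ (forall b : nat, (0 < b)%N -> rho (y3 F) (b + j)%N v = 0 ->
        (forall r : nat, rho (y1 F) r v = 0) ->
        forall r s : nat, (N - 2 * k - 1 <= r + s)%N ->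
        Y2 rho r s (iter k (rho (y2 F) j) (rho (y3 F) b v)) = 0)
    (* (iii) *)
 /\ (forall a : nat, (0 < a)%N -> rho (x1 F) (a + j)%N v = 0 ->
        (forall r : nat, rho (x3 F) r v = 0) ->
        forall r s : nat, (N - 2 * k - 1 <= r + s)%N ->
        Y2 rho r s (iter k (rho (y2 F) j) (rho (x1 F) a v)) = 0)
    (* (iv) *)
 /\ (forall a b : nat, (0 < a)%N -> (0 < b)%N ->
        rho (x1 F) (a + j)%N v = 0 -> rho (y3 F) (b + j)%N v = 0 ->
        (forall r : nat, rho (y1 F) r v = 0) ->
        (forall r : nat, rho (x3 F) r v = 0) ->
        forall r s : nat, (N - 2 * k - 2 <= r + s)%N ->
        Y2 rho r s (iter k (rho (y2 F) j) (rho (x1 F) a (rho (y3 F) b v))) = 0).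
Proof.
move=> char0 rho_mod x2_v h_v _ Y2_v j_gt0 y2_v k.
have nil_v := iter_y2_eq0_of_Y2 char0 Y2_v.
have Y2_seed M u : primitive_at rho j u ->
    (forall n, (M <= n)%N -> iter n (rho (y2 F) 0%N) u = 0) -> forall r s, (M - 2 * k <= r + s)%N -> Y2 rho r s (iter k (rho (y2 F) j) u) = 0.
  by move=> prim_u nil_u; have := Y2_iter_y2t_eq0 rho_mod char0 j_gt0 prim_u nil_u k.
have prim := primitive_v rho_mod char0 x2_v h_v j_gt0 y2_v.
have prim_y3 := primitive_y3_v rho_mod char0 x2_v h_v j_gt0 y2_v.
have prim_x1 := primitive_x1_v rho_mod char0 x2_v h_v j_gt0 y2_v.
have prim_x1_y3 := primitive_x1_y3_v rho_mod char0 x2_v h_v j_gt0 y2_v.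
split; [exact: Y2_seed prim nil_v | split; [|split]].
- move=> b _ y3_v y1_v r s krs.
  have nil_y3 := iter_y2_y3_eq0 rho_mod char0 (y1_v b) nil_v.
  by apply: Y2_seed (prim_y3 b y3_v y1_v) nil_y3 _ _ _; lia.
- move=> a _ x1_v x3_v r s krs.
  have nil_x1 := iter_y2_x1_eq0 rho_mod char0 (x3_v a) nil_v.
  by apply: Y2_seed (prim_x1 a x1_v x3_v) nil_x1 _ _ _; lia.
- move=> a b a_gt0 _ x1_v y3_v y1_v x3_v r s krs.
  have nil_y3 := iter_y2_y3_eq0 rho_mod char0 (y1_v b) nil_v.
  have x3_y3 := x3_y3_v rho_mod h_v b a x3_v (ltn_addr b a_gt0).
  have nil_x1_y3 := iter_y2_x1_eq0 rho_mod char0 x3_y3 nil_y3.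
  by apply: Y2_seed (prim_x1_y3 a b a_gt0 x1_v y3_v y1_v x3_v) nil_x1_y3 _ _ _; lia.
Qed.
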